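(* Let $u\in\mathcal{B}^N$, $m\in\mathbb{R}$, $\varepsilon>0$, $(r,\gamma)\in F(N,A,u,m)$, and $(t,\sigma)\in F(N,A,u,m-\varepsilon)$ such that $\sigma$ is a perfect matching in $\mathcal{F}(r)$ and $r_a>t_a$ for each $a\in A$. Suppose there is no $i\in N$ and $a\in A$ with $r_a>b_i>t_a$. Then there is $\Lambda>0$ such that (1) for each $0<\Lambda'\le\Lambda$, every bijection $\mu$ maximizing $\sum_{i\in N}\log\lambda_{i\mu(i)}(u,r,\Lambda')$ satisfies $u_i(r_{\mu(i)},\mu(i))=u_i(r_{\gamma'(i)},\gamma'(i))$ for all $i\in N$ and all $\gamma'$ with $(r,\gamma')\in F(N,A,u,m)$; and (2) $\lambda_{i\sigma(i)}(u,r,\Lambda)(r_{\sigma(i)}-t_{\sigma(i)})\ge\lambda_{ia}(u,r,\Lambda)(r_a-t_a)$ for all $i\in N$ and $a\in A$, i.e. $(r-t,\sigma)$ is envy-free in the economy with consumption space $\mathbb{R}_{++}\times A$ where agent $i$'s utility is $(x_a,a)\mapsto\lambda_{ia}(u,r,\Lambda)x_a$ and the total to distribute is $\sum_{a\in A}(r_a-t_a)$.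
   Context: Fix a finite set $\{\rho_1,\dots,\rho_k\}\subseteq\mathbb{R}_+$ with $\rho_1=0$. $N=\{1,\dots,n\}$ agents, $A$ a set of $n$ rooms. $\mathcal{B}$ is the set of utility functions $u_i(r_a,a)=v^i_a-r_a-\rho_i\max\{0,r_a-b_i\}$ with $v^i\in\mathbb{R}^A$, $b_i\ge0$, $\rho_i\in\{\rho_1,\dots,\rho_k\}$. An allocation for $(N,A,u,m)$ is $(r,\sigma)$ with $\sigma:N\to A$ a bijection, $r\in\mathbb{R}^A$, $\sum_ar_a=m$; envy-free means $u_i(r_{\sigma(i)},\sigma(i))\ge u_i(r_{\sigma(j)},\sigma(j))$ for all $i,j$; $F(N,A,u,m)$ is the set of envy-free allocations. $\lambda_{ia}(u,r):=1+\rho_i$ if $r_a>b_i$, else $1$. For $r$ with some envy-free $(r,\gamma)$: $\mathcal{F}(r)$ is the bipartite graph on $N\cup A$ with edge $(i,a)$ iff $u_i(r_{\gamma(i)},\gamma(i))=u_i(r_a,a)$, and a perfect matching in $\mathcal{F}(r)$ is a bijection $N\to A$ using only its edges; for $\Lambda>0$, $\lambda_{ia}(u,r,\Lambda):=\lambda_{ia}(u,r)$ if $u_i(r_{\gamma(i)},\gamma(i))=u_i(r_a,a)$ and $:=\Lambda$ otherwise. *)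

From HB Require Import structures.
From mathcomp Require Import all_boot all_order all_algebra.
From mathcomp Require Import all_classical all_reals all_analysis.
Set Implicit Arguments. Unset Strict Implicit. Unset Printing Implicit Defensive.
Import Order.TTheory GRing.Theory Num.Theory.
Local Open Scope ring_scope.

Section Defs.
Variables (R : realType) (N A : finType).
(* Parameters of the quasi-linear utilities with debt aversion:
   v i a = v^i_a, b i = b_i, rho i = rho_i. *)
Variables (v : N -> A -> R) (b rho : N -> R).

Definition util (i : N) (x : R) (a : A) : R :=
  v i a - x - rho i * Num.max 0 (x - b i).

Definition in_B (rhos : seq R) : Prop :=
  (forall i, 0 <= b i) /\ (forall i, rho i \in rhos).

Definition envy_free (r : A -> R) (sigma : N -> A) : Prop :=
  forall i j, util i (r (sigma j)) (sigma j) <= util i (r (sigma i)) (sigma i).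

Definition EF (m : R) (r : A -> R) (sigma : N -> A) : Prop :=
  bijective sigma /\ \sum_(a : A) r a = m /\ envy_free r sigma.

(* edge (i,a) of the graph F(r), relative to the envy-free (r, gamma) *)
Definition Fedge (r : A -> R) (gamma : N -> A) (i : N) (a : A) : Prop :=
  util i (r (gamma i)) (gamma i) = util i (r a) a.

Definition perfect_matching (r : A -> R) (gamma : N -> A) (mu : N -> A) : Prop :=
  bijective mu /\ forall i, Fedge r gamma i (mu i).

Definition lam (r : A -> R) (i : N) (a : A) : R :=
  if b i < r a then 1 + rho i else 1.

Definition lamL (r : A -> R) (gamma : N -> A) (L : R) (i : N) (a : A) : R :=
  if util i (r (gamma i)) (gamma i) == util i (r a) a then lam r i a else L.
End Defs.

From HB Require Import structures.
From mathcomp Require Import all_boot all_order all_algebra.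
From mathcomp Require Import all_classical all_reals all_analysis.
From mathcomp Require Import lra.
Set Implicit Arguments. Unset Strict Implicit. Unset Printing Implicit Defensive.
Import Order.TTheory GRing.Theory Num.Theory.
Local Open Scope ring_scope.

(* Because no kink b_i lies strictly between t_a and r_a, agent i's utility
   for room a is affine on [t_a, r_a] with slope -lambda_{ia}(u, r); hence
   lambda_{ia}(u, r) (r_a - t_a) is exactly i's utility gain when the price of
   a drops from r_a to t_a, and envy-freeness of (t, sigma) combined with
   sigma being a matching in F(r) gives (2) on the edges of F(r).  Off the
   edges the weight is Lambda, which is taken so small that Lambda (r_a - t_a)
   never exceeds any r_c - t_c.  For (1): sigma has log-weight >= 0, while a
   bijection using a non-edge has log-weight <= ln Lambda + sum_i ln(1 + rho_i)
   <= -1, so maximizers only use edges of F(r), and all envy-free assignments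
   at prices r give each agent the same utility. *)

(* Any ratio d_i / d_j is at most (sum_k d_k) (sum_k 1 / d_k). *)
Lemma uniform_ratio_bound (R : realType) (I : finType) (d : I -> R) :
  (forall i, 0 < d i) -> exists2 L : R, 0 < L & forall i j, L * d i <= d j.
Proof.
move=> d_gt0; set D := \sum_i d i; set S := \sum_i (d i)^-1.
have D_ge0 : 0 <= D by apply: sumr_ge0 => i _; rewrite ltW.
have S_ge0 : 0 <= S by apply: sumr_ge0 => i _; rewrite invr_ge0 ltW.
have le_D i : d i <= D.
  by rewrite /D (bigD1 i) //= lerDl sumr_ge0 // => k _; rewrite ltW.
have le_S i : (d i)^-1 <= S.
  by rewrite /S (bigD1 i) //= lerDl sumr_ge0 // => k _; rewrite invr_ge0 ltW.
have DS1_gt0 : 0 < 1 + D * S by rewrite ltr_pwDl // mulr_ge0.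
exists (1 + D * S)^-1; first by rewrite invr_gt0.
move=> i j; rewrite mulrC ler_pdivrMr //.
have ratio : d i * (d j)^-1 <= D * S.
  by apply: ler_pM; [exact: ltW | rewrite invr_ge0 ltW | exact: le_D | exact: le_S].
have -> : d i = d i * (d j)^-1 * d j by rewrite -mulrA mulVf ?mulr1 ?gt_eqF ?d_gt0.
have dj_gt0 := d_gt0 j; nra.
Qed.

Section EnvyFreeWeights.
Variables (R : realType) (N A : finType) (v : N -> A -> R) (b rho : N -> R).
Implicit Types (r t : A -> R) (g gamma sigma mu : N -> A) (L : R) (i j : N) (a : A).
Local Notation u := (util v b rho).

Lemma envy_free_util_ge r g i a :
  bijective g -> envy_free v b rho r g -> u i (r a) a <= u i (r (g i)) (g i).
Proof. by case=> g' _ g'K ef; rewrite -(g'K a); apply: ef. Qed.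

Lemma envy_free_same_util r g g' i :
  bijective g -> envy_free v b rho r g ->
  bijective g' -> envy_free v b rho r g' ->
  u i (r (g i)) (g i) = u i (r (g' i)) (g' i).
Proof.
move=> bg efg bg' efg'; apply/eqP.
by rewrite eq_le (envy_free_util_ge _ _ bg' efg') (envy_free_util_ge _ _ bg efg).
Qed.

Lemma util_sub_lam r t i a :
  t a <= r a -> ~ (t a < b i /\ b i < r a) ->
  u i (t a) a - u i (r a) a = lam b rho r i a * (r a - t a).
Proof.
move=> le_tr no_kink; rewrite /util /lam; case: ifPn => [lt_br | ].
  have le_bt : b i <= t a by rewrite leNgt; apply/negP => lt_tb; exact: no_kink.
  rewrite !max_r ?subr_ge0 ?(ltW lt_br) //; lra.
rewrite -leNgt => le_rb.
rewrite !max_l ?subr_le0 ?(le_trans le_tr le_rb) //; lra.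
Qed.

Lemma lamL_edge r gamma L i a :
  Fedge v b rho r gamma i a -> lamL v b rho r gamma L i a = lam b rho r i a.
Proof. by rewrite /lamL => ->; rewrite eqxx. Qed.

Lemma lamL_nonedge r gamma L i a :
  ~ Fedge v b rho r gamma i a -> lamL v b rho r gamma L i a = L.
Proof. by rewrite /lamL /Fedge => /eqP/negbTE ->. Qed.

Lemma lamL_cases r gamma L i a :
  lamL v b rho r gamma L i a = lam b rho r i a \/ lamL v b rho r gamma L i a = L.
Proof. by rewrite /lamL; case: ifP; [left | right]. Qed.

Hypothesis rho_ge0 : forall i, 0 <= rho i.

Lemma lam_ge1 r i a : 1 <= lam b rho r i a.
Proof. by rewrite /lam; case: ifP; rewrite ?lerDl. Qed.

Lemma lam_le r i a : lam b rho r i a <= 1 + rho i.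
Proof. by rewrite /lam; case: ifP; rewrite ?lerDl. Qed.

Definition edge_threshold : R := expR (- \sum_(i : N) ln (1 + rho i) - 1).

Lemma edge_threshold_le1 : edge_threshold <= 1.
Proof.
rewrite expR_le1 lerBlDr add0r (le_trans _ (ler0n _ 1)) // oppr_le0.
by apply: sumr_ge0 => i _; rewrite ln_ge0 // lerDl.
Qed.

Lemma ln_lamL_le r gamma L i a :
  0 < L -> L <= 1 -> ln (lamL v b rho r gamma L i a) <= ln (1 + rho i).
Proof.
have rho1_gt0 : 0 < 1 + rho i by rewrite ltr_pwDl.
move=> L_gt0 L_le1; case: (lamL_cases r gamma L i a) => ->.
  by rewrite ler_ln ?posrE ?lam_le ?(lt_le_trans ltr01 (lam_ge1 _ _ _)).
by rewrite ler_ln ?posrE // (le_trans L_le1) // lerDl.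
Qed.

Lemma sum_ln_lamL_edges_ge0 r gamma L mu :
  (forall i, Fedge v b rho r gamma i (mu i)) ->
  0 <= \sum_(i : N) ln (lamL v b rho r gamma L i (mu i)).
Proof.
by move=> mu_edges; apply: sumr_ge0 => i _; rewrite lamL_edge ?ln_ge0 ?lam_ge1.
Qed.

Lemma sum_ln_lamL_nonedge_le r gamma L mu j :
  0 < L -> L <= edge_threshold -> ~ Fedge v b rho r gamma j (mu j) ->
  \sum_(i : N) ln (lamL v b rho r gamma L i (mu i)) <= -1.
Proof.
move=> L_gt0 L_le nonedge; have L_le1 := le_trans L_le edge_threshold_le1.
rewrite (bigD1 j) //= lamL_nonedge //.
have ln_L : ln L <= - \sum_(i : N) ln (1 + rho i) - 1.
  by rewrite -[leRHS]expRK ler_ln ?posrE ?expR_gt0.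
have others : \sum_(i | i != j) ln (lamL v b rho r gamma L i (mu i))
              <= \sum_(i : N) ln (1 + rho i).
  rewrite [leRHS](bigD1 j) //= -[X in X <= _]add0r.
  by rewrite lerD ?ln_ge0 ?lerDl // ler_sum // => i _; apply: ln_lamL_le.
lra.
Qed.

Lemma max_log_lamL_on_edges r gamma L sigma mu :
  0 < L -> L <= edge_threshold ->
  (forall i, Fedge v b rho r gamma i (sigma i)) ->
  \sum_(i : N) ln (lamL v b rho r gamma L i (sigma i))
    <= \sum_(i : N) ln (lamL v b rho r gamma L i (mu i)) ->
  forall j, Fedge v b rho r gamma j (mu j).
Proof.
move=> L_gt0 L_le sigma_edges sigma_le_mu j.
apply: contrapT => nonedge.
have := le_trans (sum_ln_lamL_edges_ge0 L sigma_edges) sigma_le_mu.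
by move/le_trans/(_ (sum_ln_lamL_nonedge_le L_gt0 L_le nonedge)); rewrite ler0N1.
Qed.

Lemma lamL_increment_envy_free r gamma t sigma L :
  bijective sigma -> envy_free v b rho t sigma ->
  (forall i, Fedge v b rho r gamma i (sigma i)) ->
  (forall a, t a <= r a) ->
  (forall i a, ~ (t a < b i /\ b i < r a)) ->
  (forall a c, L * (r a - t a) <= r c - t c) ->
  forall i a, lamL v b rho r gamma L i a * (r a - t a)
              <= lamL v b rho r gamma L i (sigma i) * (r (sigma i) - t (sigma i)).
Proof.
move=> bsigma ef_t sigma_edges le_tr no_kink L_small i a.
rewrite [lamL _ _ _ _ _ _ _ (sigma i)]lamL_edge ?sigma_edges // -util_sub_lam //.
have [/eqP edge | /eqP nonedge] := boolP (u i (r (gamma i)) (gamma i) == u i (r a) a).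
  rewrite lamL_edge // -util_sub_lam // -edge (sigma_edges i).
  by rewrite lerB // envy_free_util_ge.
rewrite lamL_nonedge // util_sub_lam // (le_trans (L_small a (sigma i))) //.
by rewrite ler_peMl ?lam_ge1 // subr_ge0.
Qed.

End EnvyFreeWeights.

Theorem lemma8 (R : realType) (rhos : seq R)
  (Hrho0 : head 1 rhos = 0) (Hrhos : forall x, x \in rhos -> 0 <= x)
  (N A : finType) (v : N -> A -> R) (b rho : N -> R)
  (HB : in_B b rho rhos)
  (m eps : R) (Heps : 0 < eps)
  (r : A -> R) (gamma : N -> A) (Hr : EF v b rho m r gamma)
  (t : A -> R) (sigma : N -> A) (Ht : EF v b rho (m - eps) t sigma)
  (Hsig : perfect_matching v b rho r gamma sigma)
  (Hrt : forall a, t a < r a)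
  (Hnob : ~ (exists (i : N) (a : A), t a < b i /\ b i < r a)) :
  exists L : R, 0 < L /\
    (forall L' : R, 0 < L' -> L' <= L ->
       forall mu : N -> A, bijective mu ->
       (forall mu' : N -> A, bijective mu' ->
          \sum_(i : N) ln (lamL v b rho r gamma L' i (mu' i))
          <= \sum_(i : N) ln (lamL v b rho r gamma L' i (mu i))) ->
       forall gamma' : N -> A, EF v b rho m r gamma' ->
       forall i : N, util v b rho i (r (mu i)) (mu i)
                     = util v b rho i (r (gamma' i)) (gamma' i)) /\
    (forall (i : N) (a : A),
       lamL v b rho r gamma L i a * (r a - t a)
       <= lamL v b rho r gamma L i (sigma i) * (r (sigma i) - t (sigma i))).
Proof.
have rho_ge0 i : 0 <= rho i by apply: Hrhos; exact: HB.2.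
have [bsigma sigma_edges] := Hsig.
have rt_gt0 a : 0 < r a - t a by rewrite subr_gt0.
have [L1 L1_gt0 L1_ratio] := uniform_ratio_bound rt_gt0.
exists (Num.min (edge_threshold rho) L1).
split; first by rewrite lt_min expR_gt0.
split.
- move=> L' L'_gt0 L'_le mu _ mu_max gamma' [bgamma' [_ ef_gamma']] i.
  have L'_le_thr : L' <= edge_threshold rho.
    by apply: le_trans L'_le _; rewrite ge_min lexx.
  have mu_edges := max_log_lamL_on_edges rho_ge0 L'_gt0 L'_le_thr sigma_edges
    (mu_max _ bsigma).
  rewrite -(mu_edges i).
  exact: (envy_free_same_util i Hr.1 Hr.2.2 bgamma' ef_gamma').
- apply: lamL_increment_envy_free Ht.2.2 sigma_edges _ _ _ => //.
  + by move=> a; rewrite ltW.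
  + by move=> i a no_kink; apply: Hnob; exists i, a.
  + move=> a c; apply: le_trans (L1_ratio a c).
    by rewrite ler_pM2r ?subr_gt0 // ge_min lexx orbT.
Qed.
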